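(* Let $A$ and $B$ be groups, and let $a\in A$, $b\in B$ be non-trivial elements such that at least one of $a,b$ does not have order $2$. Then for every $x\in A*B$ with $x\notin\langle ab\rangle$, we have $\langle ab\rangle\cap x\langle ab\rangle x^{-1}=\{e\}$. In particular $\langle ab\rangle$ is conjugate separated in $A*B$.
   Context: A subgroup $H$ of a group $G$ is conjugate separated if for every $x\in G\setminus H$ the intersection $H\cap xHx^{-1}$ is finite. *)

From Stdlib Require Import List ZArith Relations.
Import ListNotations.
Set Implicit Arguments.

Record is_group (G : Type) (mul : G -> G -> G) (inv : G -> G) (e : G) : Prop := {
  grp_assoc : forall x y z, mul x (mul y z) = mul (mul x y) z;
  grp_mul1l : forall x, mul e x = x;
  grp_mul1r : forall x, mul x e = x;
  grp_mulVl : forall x, mul (inv x) x = e;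
  grp_mulVr : forall x, mul x (inv x) = e
}.

Definition has_order2 (G : Type) (mul : G -> G -> G) (e : G) (x : G) : Prop :=
  x <> e /\ mul x x = e.

Section FreeProduct.
Variables (A B : Type).
Variables (mulA : A -> A -> A) (invA : A -> A) (eA : A).
Variables (mulB : B -> B -> B) (invB : B -> B) (eB : B).

(* Elements of A*B are represented by words in the letters of A ⊔ B. *)
Definition fword := list (A + B).

(* One elementary rewriting step of the standard presentation of A*B:
   generators A ⊔ B, relations e_A = 1, e_B = 1, x y = (x*y) within each factor. *)
Inductive fp_step : fword -> fword -> Prop :=
| fp_delA : forall u v, fp_step (u ++ inl eA :: v) (u ++ v)
| fp_delB : forall u v, fp_step (u ++ inr eB :: v) (u ++ v)
| fp_mergeA : forall u v x y,
    fp_step (u ++ inl x :: inl y :: v) (u ++ inl (mulA x y) :: v)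
| fp_mergeB : forall u v x y,
    fp_step (u ++ inr x :: inr y :: v) (u ++ inr (mulB x y) :: v).

Definition fp_eq : fword -> fword -> Prop := clos_refl_sym_trans fword fp_step.

Definition fp_one : fword := [].
Definition fp_mul (u v : fword) : fword := u ++ v.
Definition fp_letter_inv (l : A + B) : A + B :=
  match l with inl x => inl (invA x) | inr y => inr (invB y) end.
Definition fp_inv (u : fword) : fword := rev (map fp_letter_inv u).

Fixpoint fp_npow (u : fword) (n : nat) : fword :=
  match n with O => fp_one | S n => fp_mul u (fp_npow u n) end.
Definition fp_zpow (u : fword) (n : Z) : fword :=
  if (0 <=? n)%Z then fp_npow u (Z.to_nat n) else fp_npow (fp_inv u) (Z.to_nat (- n)).

Definition fp_cyclic (w : fword) (y : fword) : Prop := exists n : Z, fp_eq y (fp_zpow w n).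

Definition fp_conj_mem (H : fword -> Prop) (x y : fword) : Prop :=
  exists z, H z /\ fp_eq y (fp_mul x (fp_mul z (fp_inv x))).

(* H is conjugate separated in A*B: for x not in H, H ∩ x H x^{-1} is finite,
   i.e. covered (up to equality in A*B) by a finite list. *)
Definition fp_conj_separated (H : fword -> Prop) : Prop :=
  forall x, ~ H x ->
    exists l : list fword, forall y, H y -> fp_conj_mem H x y ->
      exists z, In z l /\ fp_eq y z.

End FreeProduct.

(* We first develop normal forms: a word is reduced when its
   letters are non-trivial and alternate between the factors; letters act on
   reduced words by multiplying into the first letter, and folding this action
   gives a normal form [normal_form] with  u = v in A*B  iff  their normal
   forms coincide.  In particular two reduced words are equal in A*B only if
   they are identical.

   For c = ab the powers c^n and c^-n are reduced of even length.  The core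
   statement [conjugate_power_descent] says: if X is reduced, n >= 1 and
   X c^n X^-1 is a power of c, then X is a power of c.  It is proved by
   induction on the length of X, looking at its last letter: either X c or
   X c^-1 is shorter (and the conjugate is unchanged), or X c^n X^-1 reduces to
   the word (ba)^n, which is not a power of c because a or b has order <> 2,
   or it reduces to a word of odd length.  The theorem follows: a non-trivial
   element of <c> ∩ x<c>x^-1 would force x into <c>. *)
From Stdlib Require Import List ZArith Relations Lia ClassicalEpsilon.
Import ListNotations.

Section GroupFacts.
Variables (G : Type) (mul : G -> G -> G) (inv : G -> G) (e : G).
Hypothesis HG : is_group mul inv e.

Lemma group_inv_unique x y : mul x y = e -> x = inv y.
Proof.
  intro H. rewrite <- (grp_mul1r HG x), <- (grp_mulVr HG y), (grp_assoc HG), H.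
  apply (grp_mul1l HG).
Qed.

Lemma group_invK x : inv (inv x) = x.
Proof. symmetry. apply group_inv_unique. apply (grp_mulVr HG). Qed.

Lemma group_inv1 : inv e = e.
Proof. symmetry. apply group_inv_unique. apply (grp_mul1l HG). Qed.

Lemma group_inv_neq1 x : x <> e -> inv x <> e.
Proof. intros H H1. apply H. rewrite <- (group_invK x), H1. apply group_inv1. Qed.
End GroupFacts.
Arguments group_inv_unique {G mul inv e} HG {x y}.
Arguments group_invK {G mul inv e} HG x.
Arguments group_inv_neq1 {G mul inv e} HG {x}.

Section NormalForms.
Variables (A : Type) (mulA : A -> A -> A) (invA : A -> A) (eA : A).
Hypothesis HA : is_group mulA invA eA.
Variables (B : Type) (mulB : B -> B -> B) (invB : B -> B) (eB : B).
Hypothesis HB : is_group mulB invB eB.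

Notation W := (fword A B).
Notation feq := (fp_eq mulA eA mulB eB).
Notation fstep := (fp_step mulA eA mulB eB).
Notation finv := (fp_inv invA invB).

Definition decA (x y : A) : {x = y} + {x <> y} := excluded_middle_informative (x = y).
Definition decB (x y : B) : {x = y} + {x <> y} := excluded_middle_informative (x = y).

Definition letter_side (l : A + B) : bool := match l with inl _ => true | inr _ => false end.
Definition nontrivial_letter (l : A + B) : Prop :=
  match l with inl x => x <> eA | inr y => y <> eB end.
Definition first_side (w : W) : option bool :=
  match w with [] => None | l :: _ => Some (letter_side l) end.
Definition last_side (w : W) : option bool := first_side (rev w).

Fixpoint reduced (w : W) : Prop :=
  match w with
  | [] => True
  | l :: w' => nontrivial_letter l /\ reduced w' /\ first_side w' <> Some (letter_side l)
  end.

Definition head_A (w : W) : A * W := match w with inl y :: w' => (y, w') | _ => (eA, w) end.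
Definition head_B (w : W) : B * W := match w with inr y :: w' => (y, w') | _ => (eB, w) end.
Definition cons_A (z : A) (w : W) : W := if decA z eA then w else inl z :: w.
Definition cons_B (z : B) (w : W) : W := if decB z eB then w else inr z :: w.

Definition act (l : A + B) (w : W) : W :=
  match l with
  | inl x => cons_A (mulA x (fst (head_A w))) (snd (head_A w))
  | inr x => cons_B (mulB x (fst (head_B w))) (snd (head_B w))
  end.

Lemma head_A_cons_A z w : first_side w <> Some true -> head_A (cons_A z w) = (z, w).
Proof.
  intro H. unfold cons_A. destruct (decA z eA); [subst|reflexivity].
  destruct w as [|[y|y] w]; simpl in *; congruence.
Qed.

Lemma head_B_cons_B z w : first_side w <> Some false -> head_B (cons_B z w) = (z, w).
Proof.
  intro H. unfold cons_B. destruct (decB z eB); [subst|reflexivity].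
  destruct w as [|[y|y] w]; simpl in *; congruence.
Qed.

Lemma head_A_reduced w : reduced w ->
  first_side (snd (head_A w)) <> Some true /\ reduced (snd (head_A w))
  /\ cons_A (fst (head_A w)) (snd (head_A w)) = w.
Proof.
  intro H. destruct w as [|[y|y] w]; simpl in *.
  - unfold cons_A; destruct (decA eA eA); intuition congruence.
  - destruct H as [H1 [H2 H3]]. unfold cons_A; destruct (decA y eA); intuition congruence.
  - unfold cons_A; destruct (decA eA eA); intuition congruence.
Qed.

Lemma head_B_reduced w : reduced w ->
  first_side (snd (head_B w)) <> Some false /\ reduced (snd (head_B w))
  /\ cons_B (fst (head_B w)) (snd (head_B w)) = w.
Proof.
  intro H. destruct w as [|[y|y] w]; simpl in *.
  - unfold cons_B; destruct (decB eB eB); intuition congruence.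
  - unfold cons_B; destruct (decB eB eB); intuition congruence.
  - destruct H as [H1 [H2 H3]]. unfold cons_B; destruct (decB y eB); intuition congruence.
Qed.

Lemma act_reduced l w : reduced w -> reduced (act l w).
Proof.
  intro H. destruct l as [x|x]; simpl.
  - destruct (head_A_reduced _ H) as [H1 [H2 _]].
    unfold cons_A. destruct (decA _ eA); simpl; auto.
  - destruct (head_B_reduced _ H) as [H1 [H2 _]].
    unfold cons_B. destruct (decB _ eB); simpl; auto.
Qed.

(* The action respects the defining relations of A*B. *)
Lemma act_eA w : reduced w -> act (inl eA) w = w.
Proof. intro H. simpl. rewrite (grp_mul1l HA). apply (head_A_reduced _ H). Qed.

Lemma act_eB w : reduced w -> act (inr eB) w = w.
Proof. intro H. simpl. rewrite (grp_mul1l HB). apply (head_B_reduced _ H). Qed.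

Lemma act_mergeA x y w : reduced w -> act (inl x) (act (inl y) w) = act (inl (mulA x y)) w.
Proof.
  intro H. destruct (head_A_reduced _ H) as [H1 _]. simpl.
  rewrite head_A_cons_A by auto. simpl. rewrite (grp_assoc HA). reflexivity.
Qed.

Lemma act_mergeB x y w : reduced w -> act (inr x) (act (inr y) w) = act (inr (mulB x y)) w.
Proof.
  intro H. destruct (head_B_reduced _ H) as [H1 _]. simpl.
  rewrite head_B_cons_B by auto. simpl. rewrite (grp_assoc HB). reflexivity.
Qed.

Lemma act_cons l w : reduced (l :: w) -> act l w = l :: w.
Proof.
  intros [H1 [H2 H3]]. destruct l as [x|x]; simpl in *.
  - destruct w as [|[y|y] w]; simpl in *; try congruence;
    rewrite (grp_mul1r HA); unfold cons_A; destruct (decA x eA); congruence.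
  - destruct w as [|[y|y] w]; simpl in *; try congruence;
    rewrite (grp_mul1r HB); unfold cons_B; destruct (decB x eB); congruence.
Qed.

Definition normal_form (u : W) : W := fold_right act [] u.

Lemma normal_form_reduced u : reduced (normal_form u).
Proof. induction u; simpl; auto using act_reduced. Qed.

Lemma normal_form_app u v : normal_form (u ++ v) = fold_right act (normal_form v) u.
Proof. apply fold_right_app. Qed.

Lemma normal_form_of_reduced w : reduced w -> normal_form w = w.
Proof.
  induction w as [|l w IH]; simpl; auto.
  intro H. rewrite IH by apply H. apply act_cons; auto.
Qed.

Lemma feq_normal_form u v : feq u v -> normal_form u = normal_form v.
Proof.
  intro H. induction H as [u v H| | |]; try congruence.
  destruct H; rewrite !normal_form_app; simpl; f_equal.
  - apply act_eA, normal_form_reduced.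
  - apply act_eB, normal_form_reduced.
  - apply act_mergeA, normal_form_reduced.
  - apply act_mergeB, normal_form_reduced.
Qed.

Lemma reduced_feq u v : reduced u -> reduced v -> feq u v -> u = v.
Proof.
  intros Hu Hv H. rewrite <- (normal_form_of_reduced _ Hu), <- (normal_form_of_reduced _ Hv).
  apply feq_normal_form, H.
Qed.

Lemma feq_refl u : feq u u. Proof. apply rst_refl. Qed.
Lemma feq_sym u v : feq u v -> feq v u. Proof. apply rst_sym. Qed.
Lemma feq_trans u v w : feq u v -> feq v w -> feq u w. Proof. apply rst_trans. Qed.

Lemma step_in_context p q u v : fstep u v -> fstep (p ++ u ++ q) (p ++ v ++ q).
Proof.
  intro H. destruct H; rewrite <- !app_assoc; simpl.
  - pose proof (fp_delA mulA eA mulB eB (p ++ u) (v ++ q)) as H.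
    rewrite <- !app_assoc in H; exact H.
  - pose proof (fp_delB mulA eA mulB eB (p ++ u) (v ++ q)) as H.
    rewrite <- !app_assoc in H; exact H.
  - pose proof (fp_mergeA mulA eA mulB eB (p ++ u) (v ++ q) x y) as H.
    rewrite <- !app_assoc in H; exact H.
  - pose proof (fp_mergeB mulA eA mulB eB (p ++ u) (v ++ q) x y) as H.
    rewrite <- !app_assoc in H; exact H.
Qed.

Lemma feq_in_context p q u v : feq u v -> feq (p ++ u ++ q) (p ++ v ++ q).
Proof.
  intro H. induction H.
  - apply rst_step, step_in_context; auto.
  - apply feq_refl.
  - apply feq_sym; auto.
  - eapply feq_trans; eauto.
Qed.

Lemma feq_app u u' v v' : feq u u' -> feq v v' -> feq (u ++ v) (u' ++ v').
Proof.
  intros H1 H2. apply feq_trans with (u' ++ v).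
  - pose proof (feq_in_context [] v _ _ H1) as H. exact H.
  - pose proof (feq_in_context u' [] _ _ H2) as H. rewrite !app_nil_r in H. exact H.
Qed.

(* Single rewriting steps, stated up to a list equation for convenient use. *)
Lemma feq_mergeA p q x y L : L = p ++ inl x :: inl y :: q -> feq L (p ++ inl (mulA x y) :: q).
Proof. intros ->. apply rst_step, fp_mergeA. Qed.
Lemma feq_mergeB p q x y L : L = p ++ inr x :: inr y :: q -> feq L (p ++ inr (mulB x y) :: q).
Proof. intros ->. apply rst_step, fp_mergeB. Qed.
Lemma feq_delA p q L : L = p ++ inl eA :: q -> feq L (p ++ q).
Proof. intros ->. apply rst_step, fp_delA. Qed.
Lemma feq_delB p q L : L = p ++ inr eB :: q -> feq L (p ++ q).
Proof. intros ->. apply rst_step, fp_delB. Qed.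

Lemma cons_feq_act l w : reduced w -> feq (l :: w) (act l w).
Proof.
  intro H. destruct l as [x|x]; simpl.
  - destruct w as [|[y|y] w']; simpl; unfold cons_A.
    all: try (rewrite (grp_mul1r HA); destruct (decA x eA) as [->|];
              [apply (feq_delA []); reflexivity | apply feq_refl]).
    eapply feq_trans; [apply (feq_mergeA []); reflexivity|].
    destruct (decA (mulA x y) eA) as [E|]; [rewrite E; apply (feq_delA []) | apply feq_refl].
    reflexivity.
  - destruct w as [|[y|y] w']; simpl; unfold cons_B.
    all: try (rewrite (grp_mul1r HB); destruct (decB x eB) as [->|];
              [apply (feq_delB []); reflexivity | apply feq_refl]).
    eapply feq_trans; [apply (feq_mergeB []); reflexivity|].
    destruct (decB (mulB x y) eB) as [E|]; [rewrite E; apply (feq_delB []) | apply feq_refl].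
    reflexivity.
Qed.

Lemma feq_to_normal_form u : feq u (normal_form u).
Proof.
  induction u as [|l u IH]; simpl. apply feq_refl.
  eapply feq_trans. apply (feq_app [l] [l] _ _ (feq_refl _) IH).
  apply cons_feq_act, normal_form_reduced.
Qed.

Lemma length_normal_form u : length (normal_form u) <= length u.
Proof.
  induction u as [|l u IH]; simpl. lia.
  destruct l as [x|x]; simpl; [unfold cons_A | unfold cons_B];
    destruct (normal_form u) as [|[y|y] w]; simpl in *;
    first [destruct decA | destruct decB]; simpl; lia.
Qed.

Lemma finv_app u v : finv (u ++ v) = finv v ++ finv u.
Proof. unfold fp_inv. rewrite map_app, rev_app_distr. reflexivity. Qed.

Lemma finvK u : finv (finv u) = u.
Proof.
  unfold fp_inv. rewrite map_rev, rev_involutive, map_map.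
  induction u as [|[x|x] u IH]; simpl; f_equal; auto.
  - rewrite (group_invK HA). reflexivity.
  - rewrite (group_invK HB). reflexivity.
Qed.

Lemma length_finv u : length (finv u) = length u.
Proof. unfold fp_inv. rewrite length_rev, length_map. reflexivity. Qed.

Lemma finv_cancel_r u : feq (u ++ finv u) [].
Proof.
  induction u as [|l u IH]; simpl. apply feq_refl.
  change (finv (l :: u)) with (finv u ++ [fp_letter_inv invA invB l]).
  rewrite app_assoc.
  apply feq_trans with ([l] ++ [] ++ [fp_letter_inv invA invB l]).
  - apply (feq_app [l]); [apply feq_refl|]. apply (feq_app _ _ _ _ IH (feq_refl _)).
  - destruct l as [x|x]; simpl.
    + eapply feq_trans. apply (feq_mergeA [] []); reflexivity.
      rewrite (grp_mulVr HA). apply (feq_delA [] []). reflexivity.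
    + eapply feq_trans. apply (feq_mergeB [] []); reflexivity.
      rewrite (grp_mulVr HB). apply (feq_delB [] []). reflexivity.
Qed.

Lemma finv_cancel_l u : feq (finv u ++ u) [].
Proof. pose proof (finv_cancel_r (finv u)) as H. rewrite finvK in H. exact H. Qed.

Lemma feq_finv u v : feq u v -> feq (finv u) (finv v).
Proof.
  intro H.
  apply feq_trans with (finv u ++ (v ++ finv v)).
  { pose proof (feq_app _ _ _ _ (feq_refl (finv u)) (feq_sym _ _ (finv_cancel_r v))) as H1.
    rewrite app_nil_r in H1. exact H1. }
  apply feq_trans with ((finv u ++ u) ++ finv v).
  { rewrite <- app_assoc. apply feq_app. apply feq_refl.
    apply feq_app. apply feq_sym, H. apply feq_refl. }
  apply (feq_app _ [] _ _ (finv_cancel_l u) (feq_refl _)).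
Qed.

Lemma reduced_app u v : reduced u -> reduced v ->
  (forall s, last_side u = Some s -> first_side v = Some s -> False) -> reduced (u ++ v).
Proof.
  induction u as [|l u IH]; simpl; auto.
  intros [H1 [H2 H3]] Hv Hs. split; auto. split.
  - apply IH; auto. intros s Hl Hf. apply (Hs s); auto.
    unfold last_side in *. simpl. destruct (rev u); simpl in *; congruence.
  - destruct u as [|l' u']; simpl in *.
    + intro Hf. apply (Hs (letter_side l)); auto.
    + exact H3.
Qed.

Lemma reduced_app_l u v : reduced (u ++ v) -> reduced u.
Proof.
  induction u as [|l u IH]; simpl; auto.
  intros [H1 [H2 H3]]. repeat split; auto.
  destruct u; simpl in *; auto. discriminate.
Qed.

Lemma last_side_snoc u l : last_side (u ++ [l]) = Some (letter_side l).
Proof. unfold last_side. rewrite rev_app_distr. reflexivity. Qed.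

Lemma last_side_cons l u : u <> [] -> last_side (l :: u) = last_side u.
Proof.
  intro H. unfold last_side. simpl. destruct (rev u) eqn:E.
  - destruct u; [congruence|]. simpl in E. destruct (rev u); discriminate.
  - reflexivity.
Qed.

Lemma reduced_snoc_inv u l : reduced (u ++ [l]) ->
  nontrivial_letter l /\ last_side u <> Some (letter_side l).
Proof.
  induction u as [|l0 u IH]; simpl.
  - intros [H1 _]. split; auto. unfold last_side; simpl; discriminate.
  - intros [H1 [H2 H3]]. destruct (IH H2) as [Hl Hs]. split; auto.
    destruct u as [|l1 u'].
    + simpl in *. unfold last_side; simpl. congruence.
    + rewrite last_side_cons by discriminate. exact Hs.
Qed.

Lemma first_side_finv u : first_side (finv u) = last_side u.
Proof.
  unfold fp_inv, last_side. rewrite <- map_rev. destruct (rev u) as [|[x|x] r]; reflexivity.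
Qed.

Lemma last_side_finv u : last_side (finv u) = first_side u.
Proof. rewrite <- first_side_finv, finvK. reflexivity. Qed.

Lemma reduced_finv u : reduced u -> reduced (finv u).
Proof.
  induction u as [|l u IH]; simpl; auto.
  intros [H1 [H2 H3]].
  change (finv (l :: u)) with (finv u ++ [fp_letter_inv invA invB l]).
  apply reduced_app; auto.
  - destruct l as [x|x]; simpl in *; repeat split; try discriminate.
    + apply (group_inv_neq1 HA H1).
    + apply (group_inv_neq1 HB H1).
  - intros s Hl Hf. rewrite last_side_finv in Hl.
    destruct l; simpl in Hf, H3; congruence.
Qed.

Ltac list_eq :=
  solve [ repeat rewrite <- app_assoc; simpl; repeat rewrite <- app_assoc; simpl; reflexivity ].

Lemma npow_comm (u : W) n : fp_npow u n ++ u = u ++ fp_npow u n.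
Proof.
  induction n; simpl. rewrite app_nil_r; reflexivity.
  unfold fp_mul. rewrite <- app_assoc, IHn. reflexivity.
Qed.

Lemma npow_S_r (u : W) n : fp_npow u (S n) = fp_npow u n ++ u.
Proof. simpl. unfold fp_mul. rewrite npow_comm. reflexivity. Qed.

Lemma finv_npow (u : W) n : finv (fp_npow u n) = fp_npow (finv u) n.
Proof.
  induction n; simpl. reflexivity. unfold fp_mul. rewrite finv_app, IHn.
  rewrite <- npow_S_r. reflexivity.
Qed.

Lemma length_npow (u : W) n : length (fp_npow u n) = n * length u.
Proof. induction n; simpl; auto. unfold fp_mul. rewrite length_app, IHn. lia. Qed.

Section CyclicSubgroup.
Variables (a : A) (b : B).
Hypothesis ha : a <> eA.
Hypothesis hb : b <> eB.
Hypothesis hord : ~ has_order2 mulA eA a \/ ~ has_order2 mulB eB b.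

Definition c : W := [inl a; inr b].
Definition ci : W := [inr (invB b); inl (invA a)].
Definition ba : W := [inr b; inl a].
Notation cpow n := (fp_npow c n).
Notation cipow n := (fp_npow ci n).
Notation bapow n := (fp_npow ba n).
Notation czpow m := (fp_zpow invA invB c m).

Lemma finv_c : finv c = ci. Proof. reflexivity. Qed.
Lemma finv_ci : finv ci = c. Proof. rewrite <- finv_c. apply finvK. Qed.

Lemma reduced_cpow n : reduced (cpow n) /\ first_side (cpow n) <> Some false.
Proof.
  induction n as [|n [IH1 IH2]]; simpl; [split; auto; discriminate|].
  repeat split; auto; discriminate.
Qed.

Lemma last_side_cpow n : last_side (cpow n) <> Some true.
Proof.
  destruct n; [discriminate|].
  rewrite npow_S_r. change c with ([inl a] ++ [inr b]).
  rewrite app_assoc, last_side_snoc. discriminate.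
Qed.

Lemma reduced_cipow n : reduced (cipow n).
Proof.
  pose proof (group_inv_neq1 HA ha). pose proof (group_inv_neq1 HB hb).
  induction n; simpl; auto. repeat split; auto; try discriminate.
  destruct n; discriminate.
Qed.

Lemma reduced_bapow n : reduced (bapow n).
Proof.
  induction n; simpl; auto. repeat split; auto; try discriminate.
  destruct n; discriminate.
Qed.

Lemma czpow_cases m : (exists k, m = Z.of_nat k /\ czpow m = cpow k) \/
                     (exists k, m = (- Z.of_nat k)%Z /\ czpow m = cipow k).
Proof.
  unfold fp_zpow. destruct (Z.leb_spec 0 m).
  - left. exists (Z.to_nat m). split; [lia | reflexivity].
  - right. exists (Z.to_nat (- m)). split; [lia | reflexivity].
Qed.

Lemma czpow_pos k : czpow (Z.of_nat k) = cpow k.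
Proof.
  unfold fp_zpow. rewrite (proj2 (Z.leb_le _ _)) by lia. rewrite Nat2Z.id. reflexivity.
Qed.

Lemma czpow_neg k : czpow (- Z.of_nat k) = cipow k.
Proof.
  destruct k. reflexivity.
  unfold fp_zpow. rewrite (proj2 (Z.leb_gt _ _)) by lia.
  rewrite Z.opp_involutive, Nat2Z.id. reflexivity.
Qed.

Lemma reduced_czpow m : reduced (czpow m).
Proof. destruct (czpow_cases m) as [[k [_ ->]]|[k [_ ->]]]; apply reduced_cpow || apply reduced_cipow. Qed.

Lemma length_czpow_even m : Nat.even (length (czpow m)) = true.
Proof.
  destruct (czpow_cases m) as [[k [_ ->]]|[k [_ ->]]]; rewrite length_npow; simpl;
    rewrite Nat.even_mul; simpl; apply Bool.orb_true_r.
Qed.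

Lemma czpow_succ m : feq (czpow m ++ c) (czpow (m + 1)).
Proof.
  destruct (czpow_cases m) as [[k [-> ->]]|[[|k] [-> ->]]].
  - replace (Z.of_nat k + 1)%Z with (Z.of_nat (S k)) by lia.
    rewrite czpow_pos, npow_S_r. apply feq_refl.
  - apply feq_refl.
  - replace (- Z.of_nat (S k) + 1)%Z with (- Z.of_nat k)%Z by lia.
    rewrite czpow_neg, npow_S_r, <- app_assoc.
    rewrite <- (app_nil_r (cipow k)) at 2. apply feq_app; [apply feq_refl|].
    rewrite <- finv_c. apply finv_cancel_l.
Qed.

Lemma czpow_pred m : feq (czpow m ++ ci) (czpow (m - 1)).
Proof.
  pose proof (czpow_succ (m - 1)) as H. replace (m - 1 + 1)%Z with m in H by lia.
  apply feq_trans with ((czpow (m - 1) ++ c) ++ ci).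
  - apply feq_app; [apply feq_sym, H | apply feq_refl].
  - rewrite <- app_assoc. rewrite <- (app_nil_r (czpow (m - 1))) at 2.
    apply feq_app; [apply feq_refl|]. rewrite <- finv_c. apply finv_cancel_r.
Qed.

Lemma finv_czpow m : exists m', finv (czpow m) = czpow m'.
Proof.
  destruct (czpow_cases m) as [[k [_ ->]]|[k [_ ->]]].
  - exists (- Z.of_nat k)%Z. rewrite czpow_neg, finv_npow. reflexivity.
  - exists (Z.of_nat k). rewrite czpow_pos, finv_npow, finv_ci. reflexivity.
Qed.

(* (ba)^n, n >= 1, is not a power of ab: a power of (ab)^-1 = b^-1 a^-1 could
   only start with b a if both a and b were involutions. *)
Lemma bapow_not_power n m : 1 <= n -> bapow n <> czpow m.
Proof.
  intros Hn E. destruct n as [|n]; [lia|].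
  destruct (czpow_cases m) as [[[|k] [_ E2]]|[[|k] [_ E2]]]; rewrite E2 in E;
    try discriminate.
  simpl in E. injection E as E1 E3.
  destruct hord as [Ho|Ho]; apply Ho; split; auto.
  - rewrite E3 at 2. apply (grp_mulVr HA).
  - rewrite E1 at 2. apply (grp_mulVr HB).
Qed.

Definition conj_power (X : W) (n : nat) : W := X ++ cpow n ++ finv X.

Lemma conj_power_shift X X' u n : (u = c \/ u = ci) -> feq X' (X ++ u) ->
  feq (conj_power X' n) (conj_power X n).
Proof.
  intros Hu H. unfold conj_power.
  apply feq_trans with ((X ++ u) ++ cpow n ++ (finv u ++ finv X)).
  { apply feq_app; auto. apply feq_app; [apply feq_refl|].
    rewrite <- finv_app. apply feq_finv; auto. }
  replace ((X ++ u) ++ cpow n ++ finv u ++ finv X) with (X ++ (u ++ cpow n ++ finv u) ++ finv X)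
    by list_eq.
  apply (feq_in_context X (finv X) _ (cpow n)).
  destruct Hu as [-> | ->].
  - rewrite finv_c, app_assoc, <- npow_comm, <- app_assoc.
    rewrite <- (app_nil_r (cpow n)) at 2. apply feq_app; [apply feq_refl|].
    rewrite <- finv_c. apply finv_cancel_r.
  - rewrite finv_ci, npow_comm, app_assoc.
    apply (feq_app _ []); [|apply feq_refl]. rewrite <- finv_c. apply finv_cancel_l.
Qed.

Lemma cpow_snoc_a n : cpow n ++ [inl a] = inl a :: bapow n.
Proof. induction n; simpl; [reflexivity|]. unfold fp_mul. simpl. rewrite IHn. reflexivity. Qed.

Lemma b_cons_cpow n : inr b :: cpow n = bapow n ++ [inr b].
Proof. induction n; simpl; [reflexivity|]. unfold fp_mul. simpl. rewrite <- IHn. reflexivity. Qed.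

Lemma odd_double_succ L k : L = 2 * k + 1 -> Nat.odd L = true.
Proof. intros ->. rewrite Nat.odd_add, Nat.odd_mul. reflexivity. Qed.

Ltac length_simpl :=
  repeat (rewrite ?length_app, ?length_npow, ?length_finv; simpl; unfold fp_mul).

Definition descent_alternatives (X : W) (n : nat) : Prop :=
  (exists X' u, (u = c \/ u = ci) /\ length X' < length X /\ feq X' (X ++ u))
  \/ feq (conj_power X n) (bapow n)
  \/ (exists Wd, reduced Wd /\ Nat.odd (length Wd) = true /\ feq (conj_power X n) Wd).

Lemma last_letter_A_cases X0 x n : reduced (X0 ++ [inl x]) -> 1 <= n ->
  descent_alternatives (X0 ++ [inl x]) n.
Proof.
  intros HX Hn. destruct (reduced_snoc_inv _ _ HX) as [Hx Hside]; simpl in Hx, Hside.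
  unfold descent_alternatives, conj_power. rewrite finv_app.
  destruct (decA (mulA x a) eA) as [Exa|Nxa].
  - induction X0 as [|l' X1 _] using rev_ind.
    + (* X = a^-1: the conjugate is (ba)^n *)
      right; left.
      assert (Hxa : invA x = a) by (rewrite (group_inv_unique HA Exa); apply (group_invK HA)).
      simpl. rewrite Hxa, cpow_snoc_a.
      eapply feq_trans; [apply (feq_mergeA []); reflexivity|].
      rewrite Exa. apply (feq_delA []). reflexivity.
    + (* X = X1 y a^-1, and X c = X1 (yb) *)
      left. rewrite last_side_snoc in Hside.
      destruct l' as [?|y]; [simpl in Hside; congruence|].
      exists (X1 ++ [inr (mulB y b)]), c. split; [auto|split].
      { rewrite !length_app. simpl. lia. }
      apply feq_sym. eapply feq_trans; [apply (feq_mergeA (X1 ++ [inr y]) [inr b]); list_eq|].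
      rewrite Exa. eapply feq_trans; [apply (feq_delA (X1 ++ [inr y]) [inr b]); reflexivity|].
      apply (feq_mergeB X1 []). list_eq.
  - (* the letters x and a merge into a non-trivial letter *)
    right; right. destruct n as [|n]; [lia|].
    exists (X0 ++ inl (mulA x a) :: inr b :: cpow n ++ inl (invA x) :: finv X0).
    repeat split.
    + apply reduced_app; [exact (reduced_app_l _ _ HX)| |].
      * assert (Htail : reduced (inl (invA x) :: finv X0)).
        { split; [apply (group_inv_neq1 HA Hx)|split].
          - apply reduced_finv, (reduced_app_l _ _ HX).
          - rewrite first_side_finv. exact Hside. }
        repeat split; auto; try discriminate; [|destruct n; discriminate].
        apply reduced_app; [apply reduced_cpow | exact Htail|].
        intros s H1 H2. injection H2 as <-. exact (last_side_cpow n H1).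
      * intros s H1 H2. injection H2 as <-. exact (Hside H1).
    + apply (odd_double_succ _ (length X0 + n + 1)). length_simpl. lia.
    + apply (feq_mergeA X0). simpl. unfold fp_mul. list_eq.
Qed.

Lemma last_letter_B_cases X0 y n : reduced (X0 ++ [inr y]) -> 1 <= n ->
  descent_alternatives (X0 ++ [inr y]) n.
Proof.
  intros HX Hn. destruct (reduced_snoc_inv _ _ HX) as [Hy Hside]; simpl in Hy, Hside.
  unfold descent_alternatives, conj_power. rewrite finv_app.
  destruct (decB y b) as [-> | Nyb].
  - induction X0 as [|l' X1 _] using rev_ind.
    + (* X = b: the conjugate is (ba)^n *)
      right; left. simpl. rewrite app_comm_cons, b_cons_cpow.
      eapply feq_trans; [apply (feq_mergeB (bapow n) []); list_eq|].
      rewrite (grp_mulVr HB). rewrite <- (app_nil_r (bapow n)) at 2. apply (feq_delB _ []). reflexivity.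
    + (* X = X1 x b, and X c^-1 = X1 (x a^-1) *)
      left. rewrite last_side_snoc in Hside.
      destruct l' as [x|?]; [|simpl in Hside; congruence].
      exists (X1 ++ [inl (mulA x (invA a))]), ci. split; [auto|split].
      { rewrite !length_app. simpl. lia. }
      apply feq_sym.
      eapply feq_trans; [apply (feq_mergeB (X1 ++ [inl x]) [inl (invA a)]); list_eq|].
      rewrite (grp_mulVr HB).
      eapply feq_trans; [apply (feq_delB (X1 ++ [inl x]) [inl (invA a)]); reflexivity|].
      apply (feq_mergeA X1 []). list_eq.
  - (* the letters b and y^-1 merge into a non-trivial letter *)
    right; right. destruct n as [|n]; [lia|].
    assert (Hby : mulB b (invB y) <> eB).
    { intro E. apply Nyb. rewrite (group_inv_unique HB E). symmetry. apply (group_invK HB). }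
    exists (X0 ++ inr y :: cpow n ++ inl a :: inr (mulB b (invB y)) :: finv X0).
    repeat split.
    + apply reduced_app; [exact (reduced_app_l _ _ HX)| |].
      * assert (Htail : reduced (inl a :: inr (mulB b (invB y)) :: finv X0)).
        { repeat split; auto; try discriminate.
          - apply reduced_finv, (reduced_app_l _ _ HX).
          - rewrite first_side_finv. exact Hside. }
        repeat split; auto; [|destruct n; discriminate].
        apply reduced_app; [apply reduced_cpow | exact Htail|].
        intros s H1 H2. injection H2 as <-. exact (last_side_cpow n H1).
      * intros s H1 H2. injection H2 as <-. exact (Hside H1).
    + apply (odd_double_succ _ (length X0 + n + 1)). length_simpl. lia.
    + replace (X0 ++ inr y :: cpow n ++ inl a :: inr (mulB b (invB y)) :: finv X0)
        with ((X0 ++ inr y :: cpow n ++ [inl a]) ++ inr (mulB b (invB y)) :: finv X0) by list_eq.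
      apply feq_mergeB. rewrite npow_S_r. unfold c. list_eq.
Qed.

Lemma descent_alternatives_nonempty X n : reduced X -> X <> [] -> 1 <= n ->
  descent_alternatives X n.
Proof.
  intros HX Hne Hn. destruct (@exists_last _ X Hne) as [X0 [[x|y] ->]].
  - apply last_letter_A_cases; auto.
  - apply last_letter_B_cases; auto.
Qed.

Lemma power_unshift X u j : (u = c \/ u = ci) -> feq (X ++ u) (czpow j) ->
  exists j', feq X (czpow j').
Proof.
  intros Hu H.
  assert (HX : feq X ((X ++ u) ++ finv u)).
  { rewrite <- app_assoc, <- (app_nil_r X) at 1.
    apply feq_app; [apply feq_refl | apply feq_sym, finv_cancel_r]. }
  destruct Hu as [-> | ->]; [exists (j - 1)%Z | exists (j + 1)%Z];
    (eapply feq_trans; [exact HX|]).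
  - eapply feq_trans; [|apply czpow_pred]. apply feq_app; [exact H | apply feq_refl].
  - rewrite finv_ci. eapply feq_trans; [|apply czpow_succ]. apply feq_app; [exact H | apply feq_refl].
Qed.

Lemma conjugate_power_descent N : forall X n m, reduced X -> length X <= N -> 1 <= n ->
  feq (conj_power X n) (czpow m) -> exists j, feq X (czpow j).
Proof.
  induction N as [|N IH]; intros X n m HX HL Hn H;
    (destruct X as [|l X1]; [exists 0%Z; apply feq_refl|]);
    [simpl in HL; lia|].
  destruct (descent_alternatives_nonempty _ n HX ltac:(discriminate) Hn)
    as [[X' [u [Hu [HX'len HX']]]] | [HQ | [Wd [HWd [Hodd HW]]]]].
  - (* X u is shorter: pass to its normal form *)
    set (Y := normal_form X').
    assert (HY : feq Y (l :: X1 ++ u)).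
    { eapply feq_trans; [apply feq_sym, feq_to_normal_form | exact HX']. }
    assert (HYlen : length Y <= N).
    { pose proof (length_normal_form X'). simpl in HL, HX'len. unfold Y. lia. }
    assert (HYconj : feq (conj_power Y n) (czpow m)).
    { eapply feq_trans; [apply (conj_power_shift (l :: X1) Y u n Hu HY) | exact H]. }
    destruct (IH Y n m (normal_form_reduced _) HYlen Hn HYconj) as [j Hj].
    apply (power_unshift _ u j Hu). eapply feq_trans; [apply feq_sym, HY | exact Hj].
  - (* the conjugate would be (ba)^n *)
    exfalso. apply (bapow_not_power n m Hn).
    apply reduced_feq; [apply reduced_bapow | apply reduced_czpow |].
    eapply feq_trans; [apply feq_sym, HQ | exact H].
  - (* the conjugate would have odd length *)
    exfalso. assert (E : Wd = czpow m).
    { apply reduced_feq; [exact HWd | apply reduced_czpow |].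
      eapply feq_trans; [apply feq_sym, HW | exact H]. }
    pose proof (length_czpow_even m) as Heven. rewrite <- E, <- Nat.negb_odd, Hodd in Heven.
    discriminate.
Qed.

Lemma conjugate_power_in_cyclic X n m : 1 <= n -> feq (conj_power X n) (czpow m) ->
  exists j, feq X (czpow j).
Proof.
  intros Hn H.
  assert (HX : feq (normal_form X) X) by apply feq_sym, feq_to_normal_form.
  destruct (conjugate_power_descent (length (normal_form X)) (normal_form X) n m)
    as [j Hj]; auto using normal_form_reduced.
  - eapply feq_trans; [|exact H]. unfold conj_power.
    apply feq_app; [exact HX | apply feq_app; [apply feq_refl | apply feq_finv, HX]].
  - exists j. eapply feq_trans; [apply feq_sym, HX | exact Hj].
Qed.

Definition cyclic_ab : W -> Prop := fp_cyclic mulA invA eA mulB invB eB c.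

Lemma cyclic_malnormal x : ~ cyclic_ab x ->
  forall y, cyclic_ab y -> fp_conj_mem mulA invA eA mulB invB eB cyclic_ab x y -> feq y [].
Proof.
  intros Hx y [m Hy] [z [[n Hz] Hyz]]. unfold fp_mul in Hyz.
  assert (Hconj : feq y (x ++ czpow n ++ finv x)).
  { eapply feq_trans; [exact Hyz|].
    apply feq_app; [apply feq_refl | apply feq_app; [exact Hz | apply feq_refl]]. }
  destruct (czpow_cases n) as [[[|k] [_ E]]|[[|k] [_ E]]]; rewrite E in Hconj.
  1, 3: eapply feq_trans; [exact Hconj | apply finv_cancel_r].
  all: exfalso; apply Hx.
  - apply (conjugate_power_in_cyclic x (S k) m); [lia|].
    eapply feq_trans; [apply feq_sym, Hconj | exact Hy].
  - (* invert: x c^(k+1) x^-1 = y^-1, again a power of c *)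
    destruct (finv_czpow m) as [m' Hm'].
    apply (conjugate_power_in_cyclic x (S k) m'); [lia|].
    rewrite <- Hm'. apply feq_sym. eapply feq_trans; [apply feq_finv, feq_sym, Hy|].
    eapply feq_trans; [apply feq_finv, Hconj|].
    unfold conj_power. rewrite !finv_app, finvK, finv_npow, finv_ci, <- app_assoc.
    apply feq_refl.
Qed.
End CyclicSubgroup.
End NormalForms.

Theorem lemma2p4
  (A : Type) (mulA : A -> A -> A) (invA : A -> A) (eA : A)
  (HA : is_group mulA invA eA)
  (B : Type) (mulB : B -> B -> B) (invB : B -> B) (eB : B)
  (HB : is_group mulB invB eB)
  (a : A) (b : B) (ha : a <> eA) (hb : b <> eB)
  (hord : ~ has_order2 mulA eA a \/ ~ has_order2 mulB eB b) :
  let ab := (inl a :: inr b :: nil) : fword A B in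
  let H := fp_cyclic mulA invA eA mulB invB eB ab in
  (forall x : fword A B, ~ H x ->
     forall y, H y -> fp_conj_mem mulA invA eA mulB invB eB H x y ->
       fp_eq mulA eA mulB eB y (fp_one A B))
  /\ fp_conj_separated mulA invA eA mulB invB eB H.
Proof.
  intros ab H.
  pose proof (cyclic_malnormal A mulA invA eA HA B mulB invB eB HB a b ha hb hord) as Hmal.
  split; [exact Hmal|].
  (* a trivial intersection is covered by the single element e *)
  intros x Hx. exists [fp_one A B]. intros y Hy Hm.
  exists (fp_one A B). split; [left; reflexivity | exact (Hmal x Hx y Hy Hm)].
Qed.
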